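(* Assume the following data: (A1) an associative unital $*$-algebra $\mathcal A$ over $\mathbb C$; (A2) an $\mathcal A$-bimodule $\Omega^1$; (A3) a $\mathbb C$-linear derivation $d:\mathcal A\to\Omega^1$; (A4) a map $\omega:\Omega^1\times\overline{\Omega^1}\to\mathbb C$, linear in both slots, with $\omega(\alpha,\overline\beta)=\overline{\omega(\beta,\overline\alpha)}$, $\omega(f\alpha g,\overline\beta)=\omega(\alpha,\overline{f^*\beta g^*})$ for $f,g\in\mathcal A$, and $\omega(\alpha,\overline\alpha)>0$ for $\alpha\neq0$; (A5) a linear functional $\eta:\mathcal A\to\mathbb C$ with $\eta(f^* )=-\overline{\eta(f)}$ and $\eta([f,g])=\frac{-1}{2\sqrt{-1}}\big(\omega(df,\overline{d(g^* )})-\omega(dg,\overline{d(f^* )})\big)$ for all $f,g$. Fix $n\ge1$. Let $M:=\mathrm{Mat}(n\times n,\Omega^1)$ (the affine space of connections $\phi\mapsto d\phi+\phi A$ on the free module $\mathcal A^n$ of row vectors) and $\mathfrak k:=\{u=(u_{ij})\in\mathrm{Mat}(n\times n,\mathcal A): u_{ij}^*=-u_{ji}\ \forall i,j\}$, a real Lie algebra under the commutator. For $u\in\mathfrak k$, $A\in M$ let $du:=(du_{ij})$, $[u,A]:=uA-Au$ (matrix products using the bimodule actions), and $X_u|_A:=du+[u,A]\in M$. Define on $M$ (viewed as a real vector space) $\omega_0(B,\overline C):=\sum_{i,j}\omega(B_{ij},\overline{C_{ij}})$, $\omega^{symp}(B,C):=\operatorname{Im}\omega_0(B,\overline C)$,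 and $$H_u(A):=\eta(\operatorname{Trace}u)-\omega^{symp}(A,du)+\tfrac12\,\omega^{symp}(A,[A,u]).$$ Then $u\mapsto H_u$ is a Lie algebra homomorphism lifting the action $u\mapsto X_u$; that is, for all $u,u_1,u_2\in\mathfrak k$ and $A,B\in M$: (i) $\frac{d}{dt}\big|_{t=0}H_u(A+tB)=\omega^{symp}(X_u|_A,B)$ (so $X_u$ is the Hamiltonian vector field of $H_u$ for the constant symplectic form $\omega^{symp}$), and (ii) $\omega^{symp}(X_{u_1}|_A,X_{u_2}|_A)=H_{[u_1,u_2]}(A)$, i.e. $H_{[u_1,u_2]}=\{H_{u_1},H_{u_2}\}$ for the Poisson bracket of $\omega^{symp}$.
   Context: $\overline{\Omega^1}$ denotes the complex-conjugate vector space of $\Omega^1$ (elements $\overline\beta$, $\overline{\lambda\beta}=\bar\lambda\overline\beta$). $\operatorname{Trace}u=\sum_i u_{ii}\in\mathcal A$. *)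

From HB Require Import structures.
From mathcomp Require Import all_boot all_order all_algebra.
From mathcomp Require Import complex.
From mathcomp Require Import all_classical all_reals all_analysis.
Set Implicit Arguments. Unset Strict Implicit. Unset Printing Implicit Defensive.
Import Order.TTheory GRing.Theory Num.Theory.
Local Open Scope ring_scope.

Section Defs.
Variable R : realType.
Local Notation C := (R[i]).

Definition is_star (A : algType C) (star : A -> A) : Prop :=
  [/\ forall a b, star (a + b) = star a + star b,
      forall (c : C) a, star (c *: a) = c^* *: star a,
      forall a b, star (a * b) = star b * star a
    & forall a, star (star a) = a].

Definition is_bimodule (A : algType C) (Om : lmodType C)
  (la : A -> Om -> Om) (ra : Om -> A -> Om) : Prop :=
  (forall a x y, la a (x + y) = la a x + la a y) /\
      (forall a b x, la (a + b) x = la a x + la b x) /\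
      (forall a b x, la (a * b) x = la a (la b x)) /\
      (forall x, la 1 x = x) /\
      (forall a x y, ra (x + y) a = ra x a + ra y a) /\
      (forall a b x, ra x (a + b) = ra x a + ra x b) /\
      (forall a b x, ra x (a * b) = ra (ra x a) b) /\
      (forall x, ra x 1 = x) /\
      (forall a b x, ra (la a x) b = la a (ra x b)) /\
      (forall (c : C) a x, la (c *: a) x = c *: la a x /\ la a (c *: x) = c *: la a x) /\
      (forall (c : C) a x, ra x (c *: a) = c *: ra x a /\ ra (c *: x) a = c *: ra x a).

Definition is_derivation (A : algType C) (Om : lmodType C)
  (la : A -> Om -> Om) (ra : Om -> A -> Om) (d : A -> Om) : Prop :=
  [/\ forall a b, d (a + b) = d a + d b,
      forall (c : C) a, d (c *: a) = c *: d a
    & forall a b, d (a * b) = ra (d a) b + la a (d b)].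

(* (A4) omega alpha beta stands for omega(alpha, conj beta), beta in the
   complex-conjugate space; linearity in the conjugate slot is antilinearity in beta *)
Definition is_omega (A : algType C) (star : A -> A) (Om : lmodType C)
  (la : A -> Om -> Om) (ra : Om -> A -> Om) (omega : Om -> Om -> C) : Prop :=
  (forall x y z, omega (x + y) z = omega x z + omega y z) /\
      (forall (c : C) x z, omega (c *: x) z = c * omega x z) /\
      (forall x y z, omega z (x + y) = omega z x + omega z y) /\
      (forall (c : C) x z, omega z (c *: x) = c^* * omega z x) /\
      (forall x y, omega x y = (omega y x)^*) /\
      (forall f g x y, omega (ra (la f x) g) y = omega x (ra (la (star f) y) (star g))) /\
      (forall x, x != 0 -> 0 < omega x x).

Definition is_eta (A : algType C) (star : A -> A) (Om : lmodType C)
  (d : A -> Om) (omega : Om -> Om -> C) (eta : A -> C) : Prop :=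
  [/\ (forall a b, eta (a + b) = eta a + eta b),
      (forall (c : C) a, eta (c *: a) = c * eta a),
      (forall f, eta (star f) = - (eta f)^*)
    & (forall f g, eta (f * g - g * f) =
         (- 1) / (2%:R * ('i)%C) * (omega (d f) (d (star g)) - omega (d g) (d (star f))))].

Variables (A : algType C) (star : A -> A) (Om : lmodType C)
  (la : A -> Om -> Om) (ra : Om -> A -> Om) (d : A -> Om)
  (omega : Om -> Om -> C) (eta : A -> C) (n : nat).

Definition in_k (u : 'M[A]_n) : Prop := forall i j, star (u i j) = - u j i.
Definition commA (u v : 'M[A]_n) : 'M[A]_n := u *m v - v *m u.

Definition dM (u : 'M[A]_n) : 'M[Om]_n := \matrix_(i, j) d (u i j).
Definition lmulM (u : 'M[A]_n) (B : 'M[Om]_n) : 'M[Om]_n :=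
  \matrix_(i, j) \sum_k la (u i k) (B k j).
Definition rmulM (B : 'M[Om]_n) (u : 'M[A]_n) : 'M[Om]_n :=
  \matrix_(i, j) \sum_k ra (B i k) (u k j).
Definition brkUM (u : 'M[A]_n) (B : 'M[Om]_n) : 'M[Om]_n := lmulM u B - rmulM B u.
Definition brkMU (B : 'M[Om]_n) (u : 'M[A]_n) : 'M[Om]_n := rmulM B u - lmulM u B.

Definition Xvf (u : 'M[A]_n) (B : 'M[Om]_n) : 'M[Om]_n := dM u + brkUM u B.

Definition rscaleM (t : R) (B : 'M[Om]_n) : 'M[Om]_n := \matrix_(i, j) ((t%:C)%C *: B i j).

Definition omega0 (B D : 'M[Om]_n) : C := \sum_i \sum_j omega (B i j) (D i j).
Definition osymp (B D : 'M[Om]_n) : R := complex.Im (omega0 B D).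

Definition Ham (u : 'M[A]_n) (B : 'M[Om]_n) : C :=
  eta (\tr u) - ((osymp B (dM u))%:C)%C + (1/2%:R : C) * ((osymp B (brkMU B u))%:C)%C.
End Defs.

From Pilot Require Import Defs.
From HB Require Import structures.
From mathcomp Require Import all_boot all_order all_algebra.
From mathcomp Require Import complex.
From mathcomp Require Import all_classical all_reals all_analysis.
From mathcomp Require Import ring lra.
Import Order.TTheory GRing.Theory Num.Theory.
Set Implicit Arguments.
Unset Strict Implicit.
Unset Printing Implicit Defensive.
Local Open Scope ring_scope.

(* For u in k (u^* = -u) the infinitesimal gauge action x |-> [u, x] is
   skew-adjoint for omega0, hence for omega^symp = Im omega0.  Together with
   the Leibniz rule d[u, v] = [u, dv] - [v, du] and the Jacobi identity
   [[u, v], x] = [u, [v, x]] - [v, [u, x]] this reduces both claims to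
   bilinear bookkeeping.  The real part of t |-> H_u(A + tB) is a quadratic
   polynomial whose linear coefficient is omega^symp(X_u|_A, B); its
   imaginary part is the constant Im eta(Trace u).  In (ii) the quadratic
   terms match by Jacobi, the linear ones by Leibniz, and the constant term
   is (A5) summed over the entries of [u1, u2]:
   eta(Trace [u1, u2]) = omega^symp(du1, du2). *)

Section AdditiveMorphism.
Variables (U V : zmodType) (f : U -> V).
Hypothesis fD : {morph f : x y / x + y}.

Lemma addmorph0 : f 0 = 0.
Proof. by apply: (addrI (f 0)); rewrite -fD !addr0. Qed.

Lemma addmorphN : {morph f : x / - x}.
Proof. by move=> x; apply: (addrI (f x)); rewrite -fD !subrr addmorph0. Qed.

Lemma addmorphB : {morph f : x y / x - y}.
Proof. by move=> x y; rewrite fD addmorphN. Qed.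

Lemma addmorph_sum I (r : seq I) (P : pred I) (F : I -> U) :
  f (\sum_(i <- r | P i) F i) = \sum_(i <- r | P i) f (F i).
Proof. exact: (big_morph f fD addmorph0). Qed.

End AdditiveMorphism.

Lemma is_derive_quadratic (R : realType) (x c0 c1 c2 : R) :
  is_derive x 1 (fun t : R => c0 + t * c1 + t ^+ 2 * c2) (c1 + x *+ 2 * c2).
Proof. by apply: is_derive_eq; rewrite /GRing.scale /=; lra. Qed.

Section ComplexParts.
Variable R : realType.
Local Notation C := R[i].

Lemma Im_realM (t : R) (z : C) : complex.Im ((t%:C)%C * z) = t * complex.Im z.
Proof. by case: z => a b /=; rewrite !mul0r addr0. Qed.

Lemma real_complex_half (x : R) : ((x / 2)%:C)%C = (1 / 2%:R) * (x%:C)%C :> C.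
Proof. by rewrite rmorphM fmorphV rmorph_nat mul1r mulrC. Qed.

Lemma Im_conj_sub (z : C) : (-1) / (2%:R * 'i%C) * (z^* - z) = ((complex.Im z)%:C)%C.
Proof.
have two_i_neq0 : 2%:R * 'i%C != 0 :> C.
  by rewrite mulf_neq0 ?pnatr_eq0 // -normr_eq0 normCi oner_eq0.
have -> : (-1) / (2%:R * 'i%C) = 'i%C / 2%:R :> C.
  apply: (mulIf two_i_neq0); rewrite mulfVK // mulrCA mulrAC -expr2 sqr_i.
  by rewrite mulrC mulfVK // pnatr_eq0.
by rewrite ImJ_sub mulrC mulrA mulrAC.
Qed.

Lemma Im_conj (z : C) : complex.Im z^* = - complex.Im z.
Proof. by case: z. Qed.

End ComplexParts.

Section Hamiltonian.
Variable R : realType.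
Local Notation C := R[i].
Variables (A : algType C) (star : A -> A) (Om : lmodType C)
  (la : A -> Om -> Om) (ra : Om -> A -> Om) (d : A -> Om)
  (omega : Om -> Om -> C) (eta : A -> C) (n : nat).

Hypothesis starM : forall a b, star (a * b) = star b * star a.
Hypothesis starK : forall a, star (star a) = a.

Hypothesis laDr : forall a x y, la a (x + y) = la a x + la a y.
Hypothesis laDl : forall a b x, la (a + b) x = la a x + la b x.
Hypothesis laM : forall a b x, la (a * b) x = la a (la b x).
Hypothesis la1 : forall x, la 1 x = x.
Hypothesis raDl : forall a x y, ra (x + y) a = ra x a + ra y a.
Hypothesis raDr : forall a b x, ra x (a + b) = ra x a + ra x b.
Hypothesis raM : forall a b x, ra x (a * b) = ra (ra x a) b.
Hypothesis ra1 : forall x, ra x 1 = x.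
Hypothesis la_ra : forall a b x, ra (la a x) b = la a (ra x b).
Hypothesis laZ : forall (c : C) a x,
  la (c *: a) x = c *: la a x /\ la a (c *: x) = c *: la a x.
Hypothesis raZ : forall (c : C) a x,
  ra x (c *: a) = c *: ra x a /\ ra (c *: x) a = c *: ra x a.

Hypothesis dD : forall a b, d (a + b) = d a + d b.
Hypothesis d_mul : forall a b, d (a * b) = ra (d a) b + la a (d b).

Hypothesis omDl : forall x y z, omega (x + y) z = omega x z + omega y z.
Hypothesis omZl : forall (c : C) x z, omega (c *: x) z = c * omega x z.
Hypothesis omDr : forall x y z, omega z (x + y) = omega z x + omega z y.
Hypothesis omC : forall x y, omega x y = (omega y x)^*.
Hypothesis om_bimod : forall f g x y,
  omega (ra (la f x) g) y = omega x (ra (la (star f) y) (star g)).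

Hypothesis etaD : forall a b, eta (a + b) = eta a + eta b.
Hypothesis eta_comm : forall f g, eta (f * g - g * f) =
  (- 1) / (2%:R * ('i)%C) * (omega (d f) (d (star g)) - omega (d g) (d (star f))).

Local Notation lmulM := (@Defs.lmulM _ _ _ la n).
Local Notation rmulM := (@Defs.rmulM _ _ _ ra n).
Local Notation dM := (@Defs.dM _ _ _ d n).
Local Notation brkUM := (@Defs.brkUM _ _ _ la ra n).
Local Notation brkMU := (@Defs.brkMU _ _ _ la ra n).
Local Notation Xvf := (@Defs.Xvf _ _ _ la ra d n).
Local Notation omega0 := (@Defs.omega0 _ _ omega n).
Local Notation osymp := (@Defs.osymp _ _ omega n).
Local Notation Ham := (@Defs.Ham _ _ _ la ra d omega eta n).
Local Notation in_k := (@Defs.in_k _ _ star n).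

Implicit Types (u v : 'M[A]_n) (x y : 'M[Om]_n).

Let laDl_morph (p : Om) : {morph la ^~ p : a b / a + b} := fun a b => laDl a b p.
Let raDl_morph (a : A) : {morph ra ^~ a : p q / p + q} := raDl a.
Let raDr_morph (p : Om) : {morph ra p : a b / a + b} := fun a b => raDr a b p.
Let omDl_morph (r : Om) : {morph omega ^~ r : p q / p + q} := fun p q => omDl p q r.
Let omDr_morph (r : Om) : {morph omega r : p q / p + q} := fun p q => omDr p q r.

Lemma star1 : star 1 = 1.
Proof. by rewrite -[LHS]mulr1 -{2}(starK 1) -starM mulr1 starK. Qed.

Lemma omega_la f (x y : Om) : omega (la f x) y = omega x (la (star f) y).
Proof. by rewrite -[la f x]ra1 om_bimod star1 ra1. Qed.

Lemma omega_ra g (x y : Om) : omega (ra x g) y = omega x (ra y (star g)).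
Proof. by rewrite -[x in LHS]la1 om_bimod star1 la1. Qed.

Lemma lmulMDr u : {morph lmulM u : x y / x + y}.
Proof.
move=> x y; apply/matrixP => i j; rewrite !mxE -big_split.
by apply: eq_bigr => k _; rewrite mxE laDr.
Qed.

Lemma lmulMDl x : {morph lmulM ^~ x : u v / u + v}.
Proof.
move=> u v; apply/matrixP => i j; rewrite !mxE -big_split.
by apply: eq_bigr => k _; rewrite mxE laDl.
Qed.

Lemma rmulMDl u : {morph rmulM ^~ u : x y / x + y}.
Proof.
move=> x y; apply/matrixP => i j; rewrite !mxE -big_split.
by apply: eq_bigr => k _; rewrite mxE raDl.
Qed.

Lemma rmulMDr x : {morph rmulM x : u v / u + v}.
Proof.
move=> u v; apply/matrixP => i j; rewrite !mxE -big_split.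
by apply: eq_bigr => k _; rewrite mxE raDr.
Qed.

Lemma rscaleMD (t : R) : {morph @rscaleM _ Om n t : x y / x + y}.
Proof. by move=> x y; apply/matrixP => i j; rewrite !mxE scalerDr. Qed.

Lemma lmulM_rscaleM u t x : lmulM u (rscaleM t x) = rscaleM t (lmulM u x).
Proof.
apply/matrixP => i j; rewrite !mxE scaler_sumr.
by apply: eq_bigr => k _; rewrite mxE (laZ _ _ _).2.
Qed.

Lemma rmulM_rscaleM u t x : rmulM (rscaleM t x) u = rscaleM t (rmulM x u).
Proof.
apply/matrixP => i j; rewrite !mxE scaler_sumr.
by apply: eq_bigr => k _; rewrite mxE (raZ _ _ _).2.
Qed.

Lemma lmulM_mulmx u v x : lmulM (u *m v) x = lmulM u (lmulM v x).
Proof.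
apply/matrixP => i j; rewrite !mxE.
under [RHS]eq_bigr do rewrite mxE (addmorph_sum (laDr _)).
rewrite exchange_big /=; apply: eq_bigr => l _; rewrite mxE.
rewrite (addmorph_sum (laDl_morph _)).
by apply: eq_bigr => k _; rewrite laM.
Qed.

Lemma rmulM_mulmx u v x : rmulM x (u *m v) = rmulM (rmulM x u) v.
Proof.
apply/matrixP => i j; rewrite !mxE.
under [RHS]eq_bigr do rewrite mxE (addmorph_sum (raDl_morph _)).
rewrite exchange_big /=; apply: eq_bigr => l _; rewrite mxE.
rewrite (addmorph_sum (raDr_morph _)).
by apply: eq_bigr => k _; rewrite raM.
Qed.

Lemma lmulM_rmulM u v x : lmulM u (rmulM x v) = rmulM (lmulM u x) v.
Proof.
apply/matrixP => i j; rewrite !mxE.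
under eq_bigr do rewrite mxE (addmorph_sum (laDr _)).
rewrite exchange_big /=; apply: eq_bigr => l _; rewrite mxE.
rewrite (addmorph_sum (raDl_morph _)).
by apply: eq_bigr => k _; rewrite la_ra.
Qed.

Lemma brkUMDr u : {morph brkUM u : x y / x + y}.
Proof.
by move=> x y; rewrite /brkUM lmulMDr rmulMDl opprD addrACA.
Qed.

Lemma brkUMDl x : {morph brkUM ^~ x : u v / u + v}.
Proof.
by move=> u v; rewrite /brkUM lmulMDl rmulMDr opprD addrACA.
Qed.

Lemma brkUM_rscaleM u t x : brkUM u (rscaleM t x) = rscaleM t (brkUM u x).
Proof. by rewrite /brkUM lmulM_rscaleM rmulM_rscaleM (addmorphB (rscaleMD t)). Qed.

Lemma brkMU_opp x u : brkMU x u = - brkUM u x.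
Proof. by rewrite /brkUM opprB. Qed.

Lemma brkUM_commA u v x :
  brkUM (commA u v) x = brkUM u (brkUM v x) - brkUM v (brkUM u x).
Proof.
rewrite /brkUM /commA (addmorphB (lmulMDl x)) (addmorphB (rmulMDr x)).
rewrite !(addmorphB (lmulMDr _)) !(addmorphB (rmulMDl _)).
rewrite !lmulM_mulmx !rmulM_mulmx !lmulM_rmulM !opprB [RHS]addrACA !subrKA.
by rewrite addrACA [RHS]addrACA [in RHS](addrC (- _)).
Qed.

Lemma dMD : {morph dM : u v / u + v}.
Proof. by move=> u v; apply/matrixP => i j; rewrite !mxE dD. Qed.

Lemma dM_mulmx u v : dM (u *m v) = rmulM (dM u) v + lmulM u (dM v).
Proof.
apply/matrixP => i j; rewrite !mxE (addmorph_sum dD) -big_split.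
by apply: eq_bigr => k _; rewrite d_mul !mxE.
Qed.

Lemma dM_commA u v : dM (commA u v) = brkUM u (dM v) - brkUM v (dM u).
Proof.
rewrite /commA (addmorphB dMD) !dM_mulmx /brkUM.
by rewrite opprB opprD (addrC (rmulM (dM u) v)) addrACA.
Qed.

Lemma omega0Dl y : {morph omega0 ^~ y : x z / x + z}.
Proof.
move=> x z; rewrite /omega0 -big_split; apply: eq_bigr => i _.
by rewrite -big_split; apply: eq_bigr => j _; rewrite mxE omDl.
Qed.

Lemma omega0Dr x : {morph omega0 x : y z / y + z}.
Proof.
move=> y z; rewrite /omega0 -big_split; apply: eq_bigr => i _.
by rewrite -big_split; apply: eq_bigr => j _; rewrite mxE omDr.
Qed.

Lemma omega0C x y : omega0 x y = (omega0 y x)^*.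
Proof.
rewrite /omega0 rmorph_sum; apply: eq_bigr => i _.
by rewrite rmorph_sum; apply: eq_bigr => j _; rewrite omC.
Qed.

Lemma omega0_rscaleM t x y : omega0 (rscaleM t x) y = (t%:C)%C * omega0 x y.
Proof.
rewrite /omega0 mulr_sumr; apply: eq_bigr => i _.
by rewrite mulr_sumr; apply: eq_bigr => j _; rewrite mxE omZl.
Qed.

Lemma omega0_lmulM u x y : omega0 (lmulM u x) y = omega0 x (lmulM (map_mx star u)^T y).
Proof.
rewrite /omega0.
transitivity (\sum_i \sum_j \sum_k omega (x k j) (la (star (u i k)) (y i j))).
  apply: eq_bigr => i _; apply: eq_bigr => j _; rewrite mxE.
  rewrite (addmorph_sum (omDl_morph _)).
  by apply: eq_bigr => k _; rewrite omega_la.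
rewrite exchange_big /=; under eq_bigr do rewrite exchange_big /=.
rewrite exchange_big /=; apply: eq_bigr => k _; apply: eq_bigr => j _.
rewrite mxE (addmorph_sum (omDr_morph _)).
by apply: eq_bigr => i _; rewrite !mxE.
Qed.

Lemma omega0_rmulM u x y : omega0 (rmulM x u) y = omega0 x (rmulM y (map_mx star u)^T).
Proof.
rewrite /omega0; apply: eq_bigr => i _.
transitivity (\sum_j \sum_k omega (x i k) (ra (y i j) (star (u k j)))).
  apply: eq_bigr => j _; rewrite mxE.
  rewrite (addmorph_sum (omDl_morph _)).
  by apply: eq_bigr => k _; rewrite omega_ra.
rewrite exchange_big /=; apply: eq_bigr => k _.
rewrite mxE (addmorph_sum (omDr_morph _)).
by apply: eq_bigr => j _; rewrite !mxE.
Qed.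

Lemma omega0_brkUM u x y : omega0 (brkUM u x) y = omega0 x (brkUM (map_mx star u)^T y).
Proof.
rewrite /brkUM (addmorphB (omega0Dl y)) omega0_lmulM omega0_rmulM.
by rewrite (addmorphB (omega0Dr x)).
Qed.

Lemma in_k_adjoint u : in_k u -> (map_mx star u)^T = - u.
Proof. by move=> ku; apply/matrixP => i j; rewrite !mxE ku. Qed.

Lemma osympDl y : {morph osymp ^~ y : x z / x + z}.
Proof. by move=> x z; rewrite /osymp omega0Dl raddfD. Qed.

Lemma osympDr x : {morph osymp x : y z / y + z}.
Proof. by move=> y z; rewrite /osymp omega0Dr raddfD. Qed.

Lemma osympC x y : osymp x y = - osymp y x.
Proof. by rewrite /osymp omega0C Im_conj. Qed.

Lemma osymp_rscaleMl t x y : osymp (rscaleM t x) y = t * osymp x y.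
Proof. by rewrite /osymp omega0_rscaleM Im_realM. Qed.

Lemma osymp_rscaleMr t x y : osymp x (rscaleM t y) = t * osymp x y.
Proof. by rewrite osympC osymp_rscaleMl osympC mulrN opprK. Qed.

Lemma osymp_brkUM u x y : in_k u -> osymp (brkUM u x) y = - osymp x (brkUM u y).
Proof.
move=> ku; rewrite /osymp omega0_brkUM in_k_adjoint //.
by rewrite (addmorphN (brkUMDl y)) (addmorphN (omega0Dr x)) raddfN.
Qed.

Lemma mxtrace_commA u v :
  \tr (commA u v) = \sum_i \sum_k (u i k * v k i - v k i * u i k).
Proof.
rewrite /commA /mxtrace; under eq_bigr do rewrite !mxE.
under [RHS]eq_bigr do rewrite sumrB.
by rewrite !sumrB; congr (_ - _); rewrite exchange_big.
Qed.

Lemma eta_tr_commA u v : in_k u -> in_k v ->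
  eta (\tr (commA u v)) = ((osymp (dM u) (dM v))%:C)%C.
Proof.
move=> ku kv; rewrite mxtrace_commA (addmorph_sum etaD).
under eq_bigr do rewrite (addmorph_sum etaD).
under eq_bigr => i _ do under eq_bigr => k _ do
  rewrite eta_comm ku kv !(addmorphN dD) !(addmorphN (omDr_morph _)) opprK addrC.
under eq_bigr do rewrite -mulr_sumr sumrB.
rewrite -mulr_sumr sumrB exchange_big /= /osymp -Im_conj_sub -omega0C.
by congr (_ * (_ - _)); apply: eq_bigr => i _; apply: eq_bigr => k _; rewrite !mxE.
Qed.

Lemma Ham_split u x :
  Ham u x = eta (\tr u) + ((- osymp x (dM u) - osymp x (brkUM u x) / 2)%:C)%C.
Proof.
rewrite /Ham brkMU_opp (addmorphN (osympDr x)) -addrA.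
by rewrite -real_complex_half -rmorphN -rmorphD mulNr.
Qed.

Lemma Re_Ham u x : complex.Re (Ham u x) =
  complex.Re (eta (\tr u)) - osymp x (dM u) - osymp x (brkUM u x) / 2.
Proof. by rewrite Ham_split raddfD /= addrA. Qed.

Lemma Im_Ham u x : complex.Im (Ham u x) = complex.Im (eta (\tr u)).
Proof. by rewrite Ham_split raddfD /= addr0. Qed.

Lemma Re_Ham_shift u (a b : 'M[Om]_n) (t : R) : in_k u ->
  complex.Re (Ham u (a + rscaleM t b)) = complex.Re (Ham u a)
    + t * osymp (Xvf u a) b + t ^+ 2 * (- osymp b (brkUM u b) / 2).
Proof.
move=> ku.
have lin : osymp (Xvf u a) b =
    - osymp b (dM u) - (osymp a (brkUM u b) + osymp b (brkUM u a)) / 2.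
  rewrite /Xvf osympDl osymp_brkUM // [osymp b (brkUM u a)]osympC osymp_brkUM //.
  by rewrite [osymp (dM u) b]osympC; lra.
rewrite !Re_Ham brkUMDr brkUM_rscaleM lin.
rewrite !(osympDl, osympDr, osymp_rscaleMl, osymp_rscaleMr).
ring.
Qed.

Lemma Ham_derive u (a b : 'M[Om]_n) : in_k u ->
  is_derive (0 : R) 1 (fun t => complex.Re (Ham u (a + rscaleM t b)))
    (osymp (Xvf u a) b) /\
  is_derive (0 : R) 1 (fun t => complex.Im (Ham u (a + rscaleM t b))) 0.
Proof.
move=> ku; split.
  rewrite (funext (fun t => Re_Ham_shift a b t ku)).
  have := is_derive_quadratic 0 (complex.Re (Ham u a)) (osymp (Xvf u a) b)
    (- osymp b (brkUM u b) / 2).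
  by rewrite mul0rn mul0r addr0.
rewrite (funext (fun t => Im_Ham u (a + rscaleM t b))).
exact: is_derive_cst.
Qed.

Lemma osymp_Xvf u v (a : 'M[Om]_n) : in_k u -> in_k v ->
  ((osymp (Xvf u a) (Xvf v a))%:C)%C = Ham (commA u v) a.
Proof.
move=> ku kv.
rewrite Ham_split eta_tr_commA // -rmorphD; congr (_%:C)%C.
rewrite /Xvf dM_commA brkUM_commA osympDl (osympDr (dM u)) (osympDr (brkUM u a)).
rewrite (addmorphB (osympDr a) (brkUM u (dM v))).
rewrite (addmorphB (osympDr a) (brkUM u (brkUM v a))).
have := osymp_brkUM a (dM v) ku; have := osymp_brkUM a (dM u) kv.
have := osymp_brkUM a (brkUM v a) ku; have := osymp_brkUM a (brkUM u a) kv.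
have := osympC (dM u) (brkUM v a); have := osympC (brkUM u a) (brkUM v a).
lra.
Qed.

End Hamiltonian.

Theorem mainTheorem2 (R : realType) (A : algType R[i]) (star : A -> A)
  (Om : lmodType R[i]) (la : A -> Om -> Om) (ra : Om -> A -> Om) (d : A -> Om)
  (omega : Om -> Om -> R[i]) (eta : A -> R[i]) (n : nat)
  (hstar : is_star star) (hbim : is_bimodule la ra)
  (hd : is_derivation la ra d) (hom : is_omega star la ra omega)
  (heta : is_eta star d omega eta) (hn : (1 <= n)%N) :
  (* (i) d/dt|_{t=0} H_u(A+tB) = omega^symp(X_u|_A, B), for the C-valued
     function t |-> H_u(A+tB), componentwise (real and imaginary parts) *)
  (forall (u : 'M[A]_n) (a b : 'M[Om]_n), in_k star u ->
     is_derive (0 : R) (1 : R)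
       (fun t : R => complex.Re (Ham la ra d omega eta u (a + rscaleM t b)))
       (osymp omega (Xvf la ra d u a) b) /\
     is_derive (0 : R) (1 : R)
       (fun t : R => complex.Im (Ham la ra d omega eta u (a + rscaleM t b)))
       (0 : R)) /\
  (* (ii) omega^symp(X_{u1}|_A, X_{u2}|_A) = H_{[u1,u2]}(A) *)
  (forall (u1 u2 : 'M[A]_n) (a : 'M[Om]_n), in_k star u1 -> in_k star u2 ->
     ((osymp omega (Xvf la ra d u1 a) (Xvf la ra d u2 a))%:C)%C
       = Ham la ra d omega eta (commA u1 u2) a).
Proof.
(* The argument works for every n. *)
case: hstar => _ _ starM starK.
case: hbim => laDr [laDl [laM [la1 [raDl [raDr [raM [ra1 [la_ra [laZ raZ]]]]]]]]].
case: hd => dD _ d_mul.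
case: hom => omDl [omZl [omDr [_ [omC [om_bimod _]]]]].
case: heta => etaD _ _ eta_comm.
split=> [u a b ku | u1 u2 a ku1 ku2].
- exact: Ham_derive.
- exact: osymp_Xvf.
Qed.
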